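(* Let $(M,g)$ be a Bianchi spacetime solving Einstein's equations $\mathrm{Ric}-\frac12Sg+\Lambda g=T$ with $\rho\geq0$ and $\Lambda\geq0$. Then for all $v\in\mathbb R^3$ and all $t\in I$ with $\theta(t)\neq0$, $$(2\delta^i_m-3\Sigma^i{}_m)a^{mj}v_iv_j\geq-\frac32\frac{\bar S_+}{\theta^2}a^{ij}v_iv_j,$$ where $\bar S_+=\max\{\bar S,0\}$.
   Context: A Bianchi spacetime is $M=G\times I$, $I=(t_-,t_+)$, with $G$ a connected 3-dimensional Lie group, $g=-dt\otimes dt+a_{ij}(t)\xi^i\otimes\xi^j$, $\{\xi^i\}$ dual to a basis $\{e_i\}$ of left invariant vector fields, $a(t)$ positive definite with inverse entries $a^{ij}$. $\bar k_{ij}=\frac12\dot a_{ij}$, $\theta=a^{ij}\bar k_{ij}$, $\bar\sigma_{ij}=\bar k_{ij}-\frac13\theta a_{ij}$, $\Sigma_{ij}=\bar\sigma_{ij}/\theta$, $\Sigma^i{}_m=a^{ij}\Sigma_{jm}$. $\rho=T_{00}$ in the frame $\partial_t,e_i$. $\bar S$ is the scalar curvature of $G\times\{t\}$ with the induced metric. Summation over repeated indices. *)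

From Stdlib Require Import Reals.
Open Scope R_scope.

Fixpoint rsum (n : nat) (f : nat -> R) : R :=
  match n with O => 0 | S m => rsum m f + f m end.

Definition kdelta (i j : nat) : R := if Nat.eqb i j then 1 else 0.

(* ---------- Generic curvature of a metric in a (non-holonomic) frame {e_0..e_(n-1)} ----------
   g a b      = g(e_a,e_b),  ginv = inverse matrix,
   dg x a b   = e_x (g(e_a,e_b)),
   C c a b    = structure functions: [e_a,e_b] = sum_c C c a b e_c,
   dGam x f a b = e_x (Gam f a b).                                              *)

(* Koszul formula: Gam_low c a b = g(nabla_{e_a} e_b, e_c) *)
Definition Gam_low (n : nat) (g : nat -> nat -> R) (dg : nat -> nat -> nat -> R)
  (C : nat -> nat -> nat -> R) (c a b : nat) : R :=
  / 2 * (dg a b c + dg b a c - dg c a b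
         + rsum n (fun d => C d a b * g d c)
         - rsum n (fun d => C d a c * g d b)
         - rsum n (fun d => C d b c * g d a)).

(* nabla_{e_a} e_b = sum_c Gam c a b e_c *)
Definition Gam (n : nat) (g ginv : nat -> nat -> R) (dg : nat -> nat -> nat -> R)
  (C : nat -> nat -> nat -> R) (c a b : nat) : R :=
  rsum n (fun d => ginv c d * Gam_low n g dg C d a b).

(* R(e_a,e_b) e_c = sum_f Riem f c a b e_f, with R(X,Y)=[nabla_X,nabla_Y]-nabla_[X,Y] *)
Definition Riem (n : nat) (g ginv : nat -> nat -> R) (dg : nat -> nat -> nat -> R)
  (C : nat -> nat -> nat -> R) (dGam : nat -> nat -> nat -> nat -> R)
  (f c a b : nat) : R :=
  let G := Gam n g ginv dg C in
  dGam a f b c - dGam b f a c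
  + rsum n (fun d => G d b c * G f a d - G d a c * G f b d - C d a b * G f d c).

(* Ric(e_b,e_c) = trace of X |-> R(X,e_b)e_c *)
Definition Ric (n : nat) (g ginv : nat -> nat -> R) (dg : nat -> nat -> nat -> R)
  (C : nat -> nat -> nat -> R) (dGam : nat -> nat -> nat -> nat -> R) (b c : nat) : R :=
  rsum n (fun a => Riem n g ginv dg C dGam a c a b).

Definition Scal (n : nat) (g ginv : nat -> nat -> R) (dg : nat -> nat -> nat -> R)
  (C : nat -> nat -> nat -> R) (dGam : nat -> nat -> nat -> nat -> R) : R :=
  rsum n (fun b => rsum n (fun c => ginv b c * Ric n g ginv dg C dGam b c)).

Definition det3 (m : nat -> nat -> R) : R :=
  m 0%nat 0%nat * (m 1%nat 1%nat * m 2%nat 2%nat - m 1%nat 2%nat * m 2%nat 1%nat)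
  - m 0%nat 1%nat * (m 1%nat 0%nat * m 2%nat 2%nat - m 1%nat 2%nat * m 2%nat 0%nat)
  + m 0%nat 2%nat * (m 1%nat 0%nat * m 2%nat 1%nat - m 1%nat 1%nat * m 2%nat 0%nat).

(* inverse via the adjugate: inv3 m i j = cofactor(j,i)/det *)
Definition inv3 (m : nat -> nat -> R) (i j : nat) : R :=
  let i1 := ((j + 1) mod 3)%nat in let i2 := ((j + 2) mod 3)%nat in
  let j1 := ((i + 1) mod 3)%nat in let j2 := ((i + 2) mod 3)%nat in
  (m i1 j1 * m i2 j2 - m i1 j2 * m i2 j1) / det3 m.

Definition sym_posdef3 (m : nat -> nat -> R) : Prop :=
  (forall i j, (i < 3)%nat -> (j < 3)%nat -> m i j = m j i) /\
  (forall v : nat -> R, (exists i, (i < 3)%nat /\ v i <> 0) ->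
     rsum 3 (fun i => rsum 3 (fun j => m i j * v i * v j)) > 0).

(* ---------- structure constants of a 3-dim real Lie algebra ----------
   gam k i j : [e_i,e_j] = sum_k gam k i j e_k *)
Definition lie_structure_constants (gam : nat -> nat -> nat -> R) : Prop :=
  (forall k i j, gam k i j = - gam k j i) /\
  (forall i j k m, (i < 3)%nat -> (j < 3)%nat -> (k < 3)%nat -> (m < 3)%nat ->
     rsum 3 (fun d => gam d i j * gam m d k + gam d j k * gam m d i
                      + gam d k i * gam m d j) = 0).

(* ---------- the Bianchi spacetime in the frame (d/dt, e_1, e_2, e_3) ----------
   spacetime frame index 0 = d/dt, index (S i) = e_(i+1) (spatial index i in 0..2).
   a t i j = a_ij(t), a1 t i j = d/dt a_ij(t). *)
Definition g4 (a : R -> nat -> nat -> R) (t : R) (x y : nat) : R :=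
  match x, y with
  | O, O => -1
  | O, S _ | S _, O => 0
  | S i, S j => a t i j
  end.

Definition g4inv (a : R -> nat -> nat -> R) (t : R) (x y : nat) : R :=
  match x, y with
  | O, O => -1
  | O, S _ | S _, O => 0
  | S i, S j => inv3 (a t) i j
  end.

(* dg4 x y z = e_x (g(e_y,e_z)); only d/dt acts nontrivially on functions of t *)
Definition dg4 (a1 : R -> nat -> nat -> R) (t : R) (x y z : nat) : R :=
  match x, y, z with
  | O, S i, S j => a1 t i j
  | _, _, _ => 0
  end.

(* [d/dt, e_i] = 0, [e_i,e_j] = gam^k_ij e_k *)
Definition C4 (gam : nat -> nat -> nat -> R) (c x y : nat) : R :=
  match c, x, y with
  | S k, S i, S j => gam k i j
  | _, _, _ => 0
  end.

Definition Gam4 (gam : nat -> nat -> nat -> R) (a a1 : R -> nat -> nat -> R)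
  (t : R) (c x y : nat) : R :=
  Gam 4 (g4 a t) (g4inv a t) (dg4 a1 t) (C4 gam) c x y.

(* dG t f y z = d/dt Gam4 f y z at t; spatial frame derivatives vanish *)
Definition dGam4 (dG : R -> nat -> nat -> nat -> R) (t : R) (x f y z : nat) : R :=
  match x with O => dG t f y z | S _ => 0 end.

Definition Ric4 gam a a1 dG t (x y : nat) : R :=
  Ric 4 (g4 a t) (g4inv a t) (dg4 a1 t) (C4 gam) (dGam4 dG t) x y.

Definition Scal4 gam a a1 dG t : R :=
  Scal 4 (g4 a t) (g4inv a t) (dg4 a1 t) (C4 gam) (dGam4 dG t).

(* scalar curvature of G x {t} with the left-invariant metric a(t) *)
Definition Sbar (gam : nat -> nat -> nat -> R) (a : R -> nat -> nat -> R) (t : R) : R :=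
  Scal 3 (a t) (inv3 (a t)) (fun _ _ _ => 0) gam (fun _ _ _ _ => 0).

Definition kbar (a1 : R -> nat -> nat -> R) (t : R) (i j : nat) : R := / 2 * a1 t i j.

Definition theta (a a1 : R -> nat -> nat -> R) (t : R) : R :=
  rsum 3 (fun i => rsum 3 (fun j => inv3 (a t) i j * kbar a1 t i j)).

Definition sigmabar a a1 t (i j : nat) : R :=
  kbar a1 t i j - / 3 * theta a a1 t * a t i j.

Definition Sigma_low a a1 t (i j : nat) : R := sigmabar a a1 t i j / theta a a1 t.

Definition Sigma_up a a1 t (i m : nat) : R :=
  rsum 3 (fun j => inv3 (a t) i j * Sigma_low a a1 t j m).

Definition is_open_interval (I : R -> Prop) : Prop :=
  (exists t, I t) /\
  (forall x y z, I x -> I z -> x <= y <= z -> I y) /\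
  (forall x, I x -> exists eps, eps > 0 /\ forall y, Rabs (y - x) < eps -> I y).

(* The 00-component of Einstein's equations is the Hamiltonian constraint
   [Sbar + theta^2 - kbar_ij kbar^ij = 2 (rho + Lambda) >= 0], i.e.
   [|sigmabar|^2 <= Sbar + 2/3 theta^2]. The shear is trace free, and a trace-free
   symmetric 3x3 matrix [s] satisfies [s(u,u)^2 <= 2/3 |s|^2 |u|^4] (in an
   orthonormal frame this is a sum-of-squares identity). Hence
   [|theta| |sigmabar(v,v)| <= (2/3 theta^2 + Sbar_+/2) |v|^2], which is the claim
   after dividing by [theta^2] and completing the square. *)

From Stdlib Require Import Reals Lra Lia FunctionalExtensionality.
Open Scope R_scope.

Arguments inv3 : simpl never.

Definition sym3 (M : nat -> nat -> R) : Prop :=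
  M 1%nat 0%nat = M 0%nat 1%nat /\ M 2%nat 0%nat = M 0%nat 2%nat /\
  M 2%nat 1%nat = M 1%nat 2%nat.

Definition quad3 (M : nat -> nat -> R) (v : nat -> R) : R :=
  rsum 3 (fun i => rsum 3 (fun j => M i j * v i * v j)).

Definition pair3 (B s : nat -> nat -> R) : R :=
  rsum 3 (fun i => rsum 3 (fun j => B i j * s i j)).

Definition tnorm3 (B s : nat -> nat -> R) : R :=
  rsum 3 (fun i => rsum 3 (fun j => rsum 3 (fun m => rsum 3 (fun l =>
    B i m * B j l * s i j * s m l)))).

Definition raise3 (B : nat -> nat -> R) (v : nat -> R) (i : nat) : R :=
  rsum 3 (fun j => B i j * v j).

Definition vec3 (x y z : R) (i : nat) : R :=
  match i with 0%nat => x | 1%nat => y | _ => z end.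

Definition minor2 (M : nat -> nat -> R) : R :=
  M 0%nat 0%nat * M 1%nat 1%nat - M 0%nat 1%nat * M 0%nat 1%nat.

Lemma rsum_ext n (f g : nat -> R) :
  (forall k, (k < n)%nat -> f k = g k) -> rsum n f = rsum n g.
Proof.
  induction n as [|n IH]; intros Hfg; simpl; [reflexivity|].
  rewrite IH, Hfg; [reflexivity | lia | intros k Hk; apply Hfg; lia].
Qed.

Lemma sym_posdef3_sym M : sym_posdef3 M -> sym3 M.
Proof. intros [Hs _]; repeat split; apply Hs; lia. Qed.

Lemma sym_posdef3_vec3 M x y z :
  sym_posdef3 M -> x <> 0 \/ y <> 0 \/ z <> 0 -> 0 < quad3 M (vec3 x y z).
Proof.
  intros [_ Hp] Hxyz; apply Rlt_gt, Hp.
  destruct Hxyz as [H|[H|H]]; [exists 0%nat | exists 1%nat | exists 2%nat]; split; auto; lia.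
Qed.

Lemma sym_posdef3_minors M :
  sym_posdef3 M -> 0 < M 0%nat 0%nat /\ 0 < minor2 M /\ 0 < det3 M.
Proof.
  intros HM; destruct (sym_posdef3_sym M HM) as (S10 & S20 & S21).
  assert (H1 : 0 < M 0%nat 0%nat).
  { assert (H := sym_posdef3_vec3 M 1 0 0 HM ltac:(lra)).
    unfold quad3, vec3 in H; simpl in H; lra. }
  assert (H2 : 0 < minor2 M).
  { assert (H := sym_posdef3_vec3 M (- M 0%nat 1%nat) (M 0%nat 0%nat) 0 HM ltac:(lra)).
    unfold quad3, vec3 in H; simpl in H; rewrite S10 in H.
    apply (Rmult_lt_reg_l (M 0%nat 0%nat)); unfold minor2; lra || nra. }
  split; [exact H1 | split; [exact H2 |]].
  assert (H := sym_posdef3_vec3 M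
    (M 0%nat 1%nat * M 1%nat 2%nat - M 0%nat 2%nat * M 1%nat 1%nat)
    (M 0%nat 2%nat * M 0%nat 1%nat - M 0%nat 0%nat * M 1%nat 2%nat)
    (minor2 M) HM ltac:(lra)).
  unfold quad3, vec3 in H; simpl in H; rewrite S10, S20, S21 in H.
  apply (Rmult_lt_reg_l (minor2 M)); [exact H2|].
  unfold det3, minor2 in *; rewrite S10, S20, S21; nra.
Qed.

(* [M = L diag(D) L^T] with [L] unit lower triangular. *)
Definition ldl3_pivot (M : nat -> nat -> R) (k : nat) : R :=
  match k with
  | 0%nat => M 0%nat 0%nat
  | 1%nat => minor2 M / M 0%nat 0%nat
  | _ => det3 M / minor2 M
  end.

Definition ldl3_factor (M : nat -> nat -> R) (i k : nat) : R :=
  match i, k with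
  | 0%nat, 0%nat | 1%nat, 1%nat | 2%nat, 2%nat => 1
  | 1%nat, 0%nat => M 0%nat 1%nat / M 0%nat 0%nat
  | 2%nat, 0%nat => M 0%nat 2%nat / M 0%nat 0%nat
  | 2%nat, 1%nat =>
      (M 0%nat 0%nat * M 1%nat 2%nat - M 0%nat 1%nat * M 0%nat 2%nat) / minor2 M
  | _, _ => 0
  end.

Lemma ldl3_spec M : sym3 M -> M 0%nat 0%nat <> 0 -> minor2 M <> 0 ->
  forall i j, (i < 3)%nat -> (j < 3)%nat ->
  M i j = rsum 3 (fun k => ldl3_factor M i k * ldl3_pivot M k * ldl3_factor M j k).
Proof.
  intros (S10 & S20 & S21) H0 H1 i j Hi Hj.
  destruct i as [|[|[|i]]]; try lia; destruct j as [|[|[|j]]]; try lia;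
  unfold ldl3_factor, ldl3_pivot, det3; unfold minor2 in *; simpl;
  rewrite ?S10, ?S20, ?S21; field; auto.
Qed.

Lemma cholesky3 M : sym_posdef3 M -> exists F : nat -> nat -> R,
  forall i j, (i < 3)%nat -> (j < 3)%nat -> M i j = rsum 3 (fun k => F i k * F j k).
Proof.
  intros HM; destruct (sym_posdef3_minors M HM) as (H0 & H1 & H2).
  exists (fun i k => ldl3_factor M i k * sqrt (ldl3_pivot M k)).
  intros i j Hi Hj; rewrite ldl3_spec by (auto using sym_posdef3_sym; lra).
  apply rsum_ext; intros k Hk.
  assert (Hpiv : 0 <= ldl3_pivot M k).
  { destruct k as [|[|k]]; simpl; apply Rlt_le; try apply Rdiv_lt_0_compat; auto. }
  transitivity (ldl3_factor M i k * (sqrt (ldl3_pivot M k) * sqrt (ldl3_pivot M k))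
                * ldl3_factor M j k); [rewrite sqrt_sqrt by exact Hpiv|]; ring.
Qed.

Lemma sym_posdef3_quad_nonneg B v : sym_posdef3 B -> 0 <= quad3 B v.
Proof.
  intros [_ Hp].
  destruct (Req_dec (v 0%nat) 0) as [V0|V0];
  [destruct (Req_dec (v 1%nat) 0) as [V1|V1];
   [destruct (Req_dec (v 2%nat) 0) as [V2|V2]|]|].
  - unfold quad3; simpl; rewrite V0, V1, V2; lra.
  - apply Rlt_le, Hp; exists 2%nat; split; [lia|exact V2].
  - apply Rlt_le, Hp; exists 1%nat; split; [lia|exact V1].
  - apply Rlt_le, Hp; exists 0%nat; split; [lia|exact V0].
Qed.

Lemma inv3_sym A : sym3 A -> sym3 (inv3 A).
Proof.
  intros (S10 & S20 & S21); repeat split;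
  unfold inv3; simpl; rewrite ?S10, ?S20, ?S21; unfold Rdiv; ring.
Qed.

Lemma inv3_sym_posdef A : sym_posdef3 A -> sym_posdef3 (inv3 A).
Proof.
  intros HA; destruct (sym_posdef3_minors A HA) as (_ & _ & Hdet).
  destruct (sym_posdef3_sym A HA) as (S10 & S20 & S21).
  destruct (inv3_sym A (conj S10 (conj S20 S21))) as (B10 & B20 & B21).
  split.
  - intros i j Hi Hj.
    destruct i as [|[|[|i]]]; try lia; destruct j as [|[|[|j]]]; try lia; auto.
  - intros c [i0 [Hi0 Hc]].
    (* [c^T A^{-1} c = y^T A y] for [y = A^{-1} c], and [y <> 0] since [c = A y] *)
    set (y := raise3 (inv3 A) c).
    assert (E : quad3 (inv3 A) c = quad3 A y).
    { unfold quad3, y, raise3, inv3; simpl. unfold det3 in *. rewrite S10, S20, S21 in *.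
      field. lra. }
    unfold quad3 in E; rewrite E. destruct HA as [_ Hp]. apply Hp.
    assert (Ec : forall i, (i < 3)%nat -> c i = raise3 A y i).
    { intros i Hi; destruct i as [|[|[|i]]]; try lia;
      unfold y, raise3, inv3; simpl; unfold det3 in *; rewrite ?S10, ?S20, ?S21 in *;
      field; lra. }
    destruct (Req_dec (y 0%nat) 0) as [Y0|Y0]; [|exists 0%nat; split; [lia|exact Y0]].
    destruct (Req_dec (y 1%nat) 0) as [Y1|Y1]; [|exists 1%nat; split; [lia|exact Y1]].
    destruct (Req_dec (y 2%nat) 0) as [Y2|Y2]; [|exists 2%nat; split; [lia|exact Y2]].
    exfalso; apply Hc; rewrite (Ec i0 Hi0); unfold raise3; simpl; rewrite Y0, Y1, Y2; ring.
Qed.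

Lemma traceless_quad_sq_le_euclid (S : nat -> nat -> R) (u : nat -> R) :
  sym3 S -> pair3 kdelta S = 0 ->
  quad3 S u ^ 2 <= 2 / 3 * tnorm3 kdelta S * quad3 kdelta u ^ 2.
Proof.
  intros (S10 & S20 & S21) Htr.
  set (N := quad3 kdelta u).
  set (x := quad3 S u).
  set (Su := raise3 S u).
  set (P := fun i j => kdelta i j * N - u i * u j).
  set (M := fun i j => rsum 3 (fun k => rsum 3 (fun l => P i k * S k l * P l j)) + x / 2 * P i j).
  (* Lagrange-type identity; [P] is [N] times the projection orthogonal to [u]. *)
  assert (Hid : N ^ 2 * (N ^ 2 * tnorm3 kdelta S - 3 / 2 * x ^ 2) =
     2 * N ^ 2 * ((u 0%nat * Su 1%nat - u 1%nat * Su 0%nat) ^ 2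
                + (u 0%nat * Su 2%nat - u 2%nat * Su 0%nat) ^ 2
                + (u 1%nat * Su 2%nat - u 2%nat * Su 1%nat) ^ 2)
     + rsum 3 (fun i => rsum 3 (fun j => M i j * M i j))).
  { unfold M, P, Su, x, N, raise3, quad3, tnorm3, pair3, kdelta in *; simpl in *.
    rewrite S10, S20, S21.
    replace (S 2%nat 2%nat) with (- S 0%nat 0%nat - S 1%nat 1%nat) by lra.
    field. }
  assert (HN : 0 <= N) by (unfold N, quad3, kdelta; simpl; nra).
  destruct (Req_dec N 0) as [N0|N0].
  - assert (u 0%nat = 0 /\ u 1%nat = 0 /\ u 2%nat = 0) as (U0 & U1 & U2).
    { unfold N, quad3, kdelta in N0; simpl in N0; repeat split; nra. }
    unfold x, quad3; simpl; rewrite U0, U1, U2; nra.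
  - assert (HM : 0 <= rsum 3 (fun i => rsum 3 (fun j => M i j * M i j))) by (simpl; nra).
    assert (0 <= N ^ 2 * tnorm3 kdelta S - 3 / 2 * x ^ 2).
    { apply Rmult_le_reg_l with (N ^ 2); [apply pow_lt; lra|].
      rewrite Rmult_0_r, Hid; apply Rplus_le_le_0_compat; [|exact HM].
      apply Rmult_le_pos; [apply Rmult_le_pos; [lra | apply pow2_ge_0]|].
      repeat apply Rplus_le_le_0_compat; apply pow2_ge_0. }
    nra.
Qed.

Lemma traceless_quad_sq_le (B s : nat -> nat -> R) (v : nat -> R) :
  sym_posdef3 B -> sym3 s -> pair3 B s = 0 ->
  quad3 s (raise3 B v) ^ 2 <= 2 / 3 * tnorm3 B s * quad3 B v ^ 2.
Proof.
  intros HB (s10 & s20 & s21) Htr.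
  destruct (cholesky3 B HB) as [F HF].
  (* In the orthonormal coframe given by [B = F F^T] this is the Euclidean case. *)
  set (u := fun k => rsum 3 (fun i => F i k * v i)).
  set (S := fun k l => rsum 3 (fun i => rsum 3 (fun j => F i k * s i j * F j l))).
  assert (Hx : quad3 S u = quad3 s (raise3 B v)).
  { unfold quad3, raise3, S, u; simpl; rewrite !HF by lia; simpl.
    rewrite s10, s20, s21; ring. }
  assert (Hn : tnorm3 kdelta S = tnorm3 B s).
  { unfold tnorm3, kdelta, S; simpl; rewrite !HF by lia; simpl.
    rewrite s10, s20, s21; ring. }
  assert (Hq : quad3 kdelta u = quad3 B v).
  { unfold quad3, kdelta, u; simpl; rewrite !HF by lia; simpl; ring. }
  rewrite <- Hx, <- Hn, <- Hq.
  apply traceless_quad_sq_le_euclid.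
  - unfold S; repeat split; simpl; rewrite s10, s20, s21; ring.
  - rewrite <- Htr; unfold pair3, kdelta, S; simpl; rewrite !HF by lia; simpl.
    rewrite s10, s20, s21; ring.
Qed.

Definition shear3 (A k : nat -> nat -> R) (i j : nat) : R :=
  k i j - / 3 * pair3 (inv3 A) k * A i j.

Lemma shear3_sym A k : sym3 A -> sym3 k -> sym3 (shear3 A k).
Proof.
  intros (S10 & S20 & S21) (K10 & K20 & K21); repeat split; unfold shear3;
  rewrite ?S10, ?S20, ?S21, ?K10, ?K20, ?K21; reflexivity.
Qed.

Lemma pair3_sub_scale B k A c :
  pair3 B (fun i j => k i j - c * A i j) = pair3 B k - c * pair3 B A.
Proof. unfold pair3; simpl; ring. Qed.

Lemma shear3_traceless A k : sym3 A -> det3 A <> 0 -> pair3 (inv3 A) (shear3 A k) = 0.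
Proof.
  intros (S10 & S20 & S21) Hd.
  assert (HtrA : pair3 (inv3 A) A = 3).
  { unfold pair3, inv3; simpl; unfold det3 in *; rewrite ?S10, ?S20, ?S21 in *.
    field; exact Hd. }
  unfold shear3; rewrite pair3_sub_scale, HtrA; field.
Qed.

Lemma shear3_tnorm A k : sym3 A -> det3 A <> 0 -> sym3 k ->
  tnorm3 (inv3 A) (shear3 A k) = tnorm3 (inv3 A) k - pair3 (inv3 A) k ^ 2 / 3.
Proof.
  intros (S10 & S20 & S21) Hd (K10 & K20 & K21).
  unfold tnorm3, shear3, pair3, inv3; simpl; unfold det3 in *.
  rewrite ?S10, ?S20, ?S21, ?K10, ?K20, ?K21 in *; field; exact Hd.
Qed.

Lemma shear_form_arith q x th n Sb : 0 <= q -> th <> 0 ->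
  x ^ 2 <= 2 / 3 * n * q ^ 2 -> n <= Sb + 2 / 3 * th ^ 2 ->
  2 * q - 3 / th * x >= - (3 / 2) * (Rmax Sb 0 / th ^ 2) * q.
Proof.
  intros Hq Hth Hx Hn.
  set (c := Rmax Sb 0).
  assert (Hc : 0 <= c /\ Sb <= c) by (split; [apply Rmax_r | apply Rmax_l]).
  assert (Hth2 : 0 < th ^ 2) by (rewrite <- Rsqr_pow2; apply Rsqr_pos_lt, Hth).
  (* [W^2 - (x th)^2 >= c^2 q^2 / 4 >= 0], completing the square *)
  set (W := (2 / 3 * th ^ 2 + c / 2) * q).
  assert (HW : 0 <= W) by (unfold W; apply Rmult_le_pos; lra).
  assert (HxW2 : (x * th) ^ 2 <= W ^ 2).
  { assert (x ^ 2 * th ^ 2 <= 2 / 3 * (c + 2 / 3 * th ^ 2) * q ^ 2 * th ^ 2).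
    { apply Rmult_le_compat_r; [lra|].
      apply Rle_trans with (1 := Hx), Rmult_le_compat_r; [apply pow2_ge_0 | lra]. }
    unfold W; nra. }
  assert (HxW : x * th <= W) by nra.
  assert (E : 2 * q - 3 / th * x + (3 / 2) * (c / th ^ 2) * q = 3 * (W - x * th) / th ^ 2).
  { unfold W; field; exact Hth. }
  assert (0 <= 3 * (W - x * th) / th ^ 2) by (apply Rmult_le_pos; [lra | apply Rlt_le, Rinv_0_lt_compat, Hth2]).
  lra.
Qed.

Lemma shear_form_expand A k v : sym3 (inv3 A) -> pair3 (inv3 A) k <> 0 ->
  rsum 3 (fun i => rsum 3 (fun m => rsum 3 (fun j =>
    (2 * kdelta i m - 3 * rsum 3 (fun l => inv3 A i l * (shear3 A k l m / pair3 (inv3 A) k)))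
      * inv3 A m j * v i * v j)))
  = 2 * quad3 (inv3 A) v
    - 3 / pair3 (inv3 A) k * quad3 (shear3 A k) (raise3 (inv3 A) v).
Proof.
  intros (B10 & B20 & B21) Hth.
  set (th := pair3 (inv3 A) k) in *.
  unfold quad3, raise3, kdelta; simpl; rewrite ?B10, ?B20, ?B21; field; exact Hth.
Qed.

Lemma shear_form_lower_bound A k Sb v :
  sym_posdef3 A -> sym3 k -> pair3 (inv3 A) k <> 0 ->
  tnorm3 (inv3 A) k <= Sb + pair3 (inv3 A) k ^ 2 ->
  rsum 3 (fun i => rsum 3 (fun m => rsum 3 (fun j =>
    (2 * kdelta i m - 3 * rsum 3 (fun l => inv3 A i l * (shear3 A k l m / pair3 (inv3 A) k)))
      * inv3 A m j * v i * v j)))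
  >= - (3 / 2) * (Rmax Sb 0 / pair3 (inv3 A) k ^ 2) * quad3 (inv3 A) v.
Proof.
  intros HA Hk Hth Hn.
  destruct (sym_posdef3_minors A HA) as (_ & _ & Hdet).
  assert (Hd : det3 A <> 0) by lra.
  assert (HAs := sym_posdef3_sym A HA).
  assert (HB := inv3_sym_posdef A HA).
  rewrite shear_form_expand by (auto using sym_posdef3_sym).
  apply shear_form_arith with (n := tnorm3 (inv3 A) (shear3 A k)).
  - apply sym_posdef3_quad_nonneg, HB.
  - exact Hth.
  - apply traceless_quad_sq_le; auto using shear3_sym, shear3_traceless.
  - rewrite shear3_tnorm by auto; lra.
Qed.

(* The Stdlib rules, restated on lambda-terms so that [eapply] unifies with them. *)
Lemma derivable_pt_lim_mult' f g x lf lg :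
  derivable_pt_lim f x lf -> derivable_pt_lim g x lg ->
  derivable_pt_lim (fun s => f s * g s) x (lf * g x + f x * lg).
Proof. apply derivable_pt_lim_mult. Qed.

Lemma derivable_pt_lim_plus' f g x lf lg :
  derivable_pt_lim f x lf -> derivable_pt_lim g x lg ->
  derivable_pt_lim (fun s => f s + g s) x (lf + lg).
Proof. apply derivable_pt_lim_plus. Qed.

Lemma derivable_pt_lim_minus' f g x lf lg :
  derivable_pt_lim f x lf -> derivable_pt_lim g x lg ->
  derivable_pt_lim (fun s => f s - g s) x (lf - lg).
Proof. apply derivable_pt_lim_minus. Qed.

Lemma derivable_pt_lim_div' f g x lf lg :
  derivable_pt_lim f x lf -> derivable_pt_lim g x lg -> g x <> 0 ->
  derivable_pt_lim (fun s => f s / g s) x ((lf * g x - lg * f x) / (g x)²).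
Proof. apply derivable_pt_lim_div. Qed.

Lemma derivable_pt_lim_eq f x l1 l2 :
  derivable_pt_lim f x l1 -> l1 = l2 -> derivable_pt_lim f x l2.
Proof. intros H <-; exact H. Qed.

Lemma derivable_pt_lim_rsum n (g : nat -> R -> R) (dg : nat -> R) x :
  (forall i, (i < n)%nat -> derivable_pt_lim (g i) x (dg i)) ->
  derivable_pt_lim (fun s => rsum n (fun i => g i s)) x (rsum n dg).
Proof.
  induction n as [|n IH]; intros H; simpl.
  - apply derivable_pt_lim_const.
  - apply (derivable_pt_lim_plus' (fun s => rsum n (fun i => g i s)) (g n)).
    + apply IH; intros; apply H; lia.
    + apply H; lia.
Qed.

Lemma derivable_pt_lim_local_unique f g x r l1 l2 :
  0 < r -> (forall y, Rabs (y - x) < r -> f y = g y) ->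
  derivable_pt_lim f x l1 -> derivable_pt_lim g x l2 -> l1 = l2.
Proof.
  intros Hr Hfg H1 H2.
  apply uniqueness_limite with (f := g) (x := x); [|exact H2].
  intros eps He. destruct (H1 eps He) as [d Hd].
  assert (Hm : 0 < Rmin d r) by (apply Rmin_pos; [apply cond_pos | exact Hr]).
  exists (mkposreal _ Hm). intros h Hh Hhr. simpl in Hhr.
  rewrite <- (Hfg (x + h)), <- (Hfg x).
  - apply Hd; auto. apply Rlt_le_trans with (1 := Hhr); apply Rmin_l.
  - rewrite Rminus_diag, Rabs_R0; exact Hr.
  - replace (x + h - x) with h by ring. apply Rlt_le_trans with (1 := Hhr); apply Rmin_r.
Qed.

Lemma derivative_sym3 (a a1 : R -> nat -> nat -> R) t r :
  0 < r -> (forall s, Rabs (s - t) < r -> sym3 (a s)) ->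
  (forall i j, (i < 3)%nat -> (j < 3)%nat ->
     derivable_pt_lim (fun s => a s i j) t (a1 t i j)) ->
  sym3 (a1 t).
Proof.
  intros Hr Hsym Ha1.
  repeat split; eapply derivable_pt_lim_local_unique; try exact Hr;
  try (apply Ha1; lia);
  intros s Hs; destruct (Hsym s Hs) as (E10 & E20 & E21); congruence.
Qed.

Lemma derivable_pt_lim_inv3 (a a1 : R -> nat -> nat -> R) t
  (Ha1 : forall i j, (i < 3)%nat -> (j < 3)%nat ->
           derivable_pt_lim (fun s => a s i j) t (a1 t i j))
  (Hd : det3 (a t) <> 0) :
  forall i j, (i < 3)%nat -> (j < 3)%nat ->
  derivable_pt_lim (fun s => inv3 (a s) i j) t
    (- rsum 3 (fun k => rsum 3 (fun l => inv3 (a t) i k * a1 t k l * inv3 (a t) l j))).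
Proof.
  intros i j Hi Hj.
  assert (Hd' : (fun s => det3 (a s)) t <> 0) by exact Hd.
  unfold det3 in Hd'.
  destruct i as [|[|[|i]]]; try lia; destruct j as [|[|[|j]]]; try lia;
  unfold inv3; simpl; unfold det3 in *;
  (eapply derivable_pt_lim_eq;
   [ repeat first
       [ eapply derivable_pt_lim_div'; [ | | exact Hd' ]
       | eapply derivable_pt_lim_minus' | eapply derivable_pt_lim_plus'
       | eapply derivable_pt_lim_mult' | (apply Ha1; lia) ]
   | unfold Rsqr; field; exact Hd ]).
Qed.

Definition spatial_gamma (gam : nat -> nat -> nat -> R) (A : nat -> nat -> R) :
  nat -> nat -> nat -> R :=
  Gam 3 A (inv3 A) (fun _ _ _ => 0) gam.
Arguments spatial_gamma : simpl never.

(* Christoffel symbols of [-dt^2 + A_ij xi^i xi^j] with [dA/dt = K]. *)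
Definition bianchi_gamma (gam : nat -> nat -> nat -> R) (A K : nat -> nat -> R)
  (c x y : nat) : R :=
  match c, x, y with
  | S c', S x', S y' => spatial_gamma gam A c' x' y'
  | O, S i, S j => / 2 * K i j
  | S i, S j, O | S i, O, S j => rsum 3 (fun k => inv3 A i k * (/ 2 * K j k))
  | _, _, _ => 0
  end.

Lemma Gam4_bianchi gam a a1 t :
  Gam 4 (g4 a t) (g4inv a t) (dg4 a1 t) (C4 gam) = bianchi_gamma gam (a t) (a1 t).
Proof.
  apply functional_extensionality; intro c.
  apply functional_extensionality; intro x.
  apply functional_extensionality; intro y.
  destruct c as [|c]; destruct x as [|x]; destruct y as [|y];
  unfold bianchi_gamma, spatial_gamma, Gam, Gam_low; simpl; ring.
Qed.

Lemma ricci00_scal_bianchi gam a a1 dG t :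
  sym3 (inv3 (a t)) -> sym3 (a1 t) ->
  Ric4 gam a a1 dG t 0 0 + / 2 * Scal4 gam a a1 dG t =
  / 2 * Sbar gam a t + / 2 * theta a a1 t ^ 2
  - 3 / 2 * tnorm3 (inv3 (a t)) (kbar a1 t)
  - / 2 * rsum 3 (fun i => dG t (S i) (S i) 0%nat)
  + / 2 * pair3 (inv3 (a t)) (fun i j => dG t 0%nat (S i) (S j)).
Proof.
  intros (B10 & B20 & B21) (K10 & K20 & K21).
  unfold Ric4, Scal4, Sbar, theta, tnorm3, pair3, kbar, Scal, Ric, Riem.
  cbv zeta; rewrite Gam4_bianchi.
  change (Gam 3 (a t) (inv3 (a t)) (fun _ _ _ => 0) gam) with (spatial_gamma gam (a t)).
  simpl; rewrite B10, B20, B21, K10, K20, K21; field.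
Qed.

Lemma derivative_trace_gamma gam a a1 dG t
  (Ha1 : forall i j, (i < 3)%nat -> (j < 3)%nat ->
           derivable_pt_lim (fun s => a s i j) t (a1 t i j))
  (HdG : forall c x y, (c < 4)%nat -> (x < 4)%nat -> (y < 4)%nat ->
           derivable_pt_lim (fun s => Gam4 gam a a1 s c x y) t (dG t c x y))
  (Hd : det3 (a t) <> 0) :
  sym3 (inv3 (a t)) -> sym3 (a1 t) ->
  rsum 3 (fun i => dG t (S i) (S i) 0%nat) =
  - 2 * tnorm3 (inv3 (a t)) (kbar a1 t)
  + pair3 (inv3 (a t)) (fun i j => dG t 0%nat (S i) (S j)).
Proof.
  intros (B10 & B20 & B21) (K10 & K20 & K21).
  transitivity (rsum 3 (fun i => rsum 3 (fun k =>
     (- rsum 3 (fun m => rsum 3 (fun l => inv3 (a t) i m * a1 t m l * inv3 (a t) l k)))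
       * (/ 2 * a1 t i k) + inv3 (a t) i k * dG t 0%nat (S i) (S k)))).
  2: { unfold tnorm3, pair3, kbar; simpl; rewrite B10, B20, B21, K10, K20, K21; field. }
  (* both sides are the derivative of [Gam^i_{i0} = a^{ik} Gam_{0ik}] *)
  apply uniqueness_limite with (x := t)
    (f := fun s => rsum 3 (fun i => Gam4 gam a a1 s (S i) (S i) 0%nat)).
  - apply (derivable_pt_lim_rsum 3 (fun i s => Gam4 gam a a1 s (S i) (S i) 0%nat)).
    intros i Hi; apply HdG; lia.
  - replace (fun s => rsum 3 (fun i => Gam4 gam a a1 s (S i) (S i) 0%nat)) with
      (fun s => rsum 3 (fun i => rsum 3 (fun k =>
         inv3 (a s) i k * Gam4 gam a a1 s 0%nat (S i) (S k)))).
    2: { apply functional_extensionality; intro s; unfold Gam4; rewrite Gam4_bianchi.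
         reflexivity. }
    apply (derivable_pt_lim_rsum 3 (fun i s => rsum 3 (fun k =>
             inv3 (a s) i k * Gam4 gam a a1 s 0%nat (S i) (S k)))); intros i Hi.
    apply (derivable_pt_lim_rsum 3 (fun k s =>
             inv3 (a s) i k * Gam4 gam a a1 s 0%nat (S i) (S k))); intros k Hk.
    eapply derivable_pt_lim_eq.
    + apply derivable_pt_lim_mult';
        [apply derivable_pt_lim_inv3; auto | apply HdG; lia].
    + unfold Gam4; rewrite Gam4_bianchi; reflexivity.
Qed.

Lemma einstein00_bianchi gam a a1 dG t
  (Ha1 : forall i j, (i < 3)%nat -> (j < 3)%nat ->
           derivable_pt_lim (fun s => a s i j) t (a1 t i j))
  (HdG : forall c x y, (c < 4)%nat -> (x < 4)%nat -> (y < 4)%nat ->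
           derivable_pt_lim (fun s => Gam4 gam a a1 s c x y) t (dG t c x y))
  (Hd : det3 (a t) <> 0) :
  sym3 (inv3 (a t)) -> sym3 (a1 t) ->
  Ric4 gam a a1 dG t 0 0 + / 2 * Scal4 gam a a1 dG t =
  / 2 * (Sbar gam a t + theta a a1 t ^ 2 - tnorm3 (inv3 (a t)) (kbar a1 t)).
Proof.
  intros HB Hk.
  rewrite ricci00_scal_bianchi, (derivative_trace_gamma gam a a1 dG t) by auto; field.
Qed.

Theorem mainTheorem8
  (gam : nat -> nat -> nat -> R) (I : R -> Prop)
  (a a1 : R -> nat -> nat -> R) (dG : R -> nat -> nat -> nat -> R)
  (T : R -> nat -> nat -> R) (Lambda : R)
  (Hgam : lie_structure_constants gam)
  (HI : is_open_interval I)
  (Hpos : forall t, I t -> sym_posdef3 (a t))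
  (Ha1 : forall t i j, I t -> (i < 3)%nat -> (j < 3)%nat ->
           derivable_pt_lim (fun s => a s i j) t (a1 t i j))
  (HdG : forall t c x y, I t -> (c < 4)%nat -> (x < 4)%nat -> (y < 4)%nat ->
           derivable_pt_lim (fun s => Gam4 gam a a1 s c x y) t (dG t c x y))
  (HEinstein : forall t x y, I t -> (x < 4)%nat -> (y < 4)%nat ->
           Ric4 gam a a1 dG t x y - / 2 * Scal4 gam a a1 dG t * g4 a t x y
             + Lambda * g4 a t x y = T t x y)
  (Hrho : forall t, I t -> T t 0%nat 0%nat >= 0)
  (HLambda : Lambda >= 0) :
  forall (v : nat -> R) (t : R), I t -> theta a a1 t <> 0 ->
    rsum 3 (fun i => rsum 3 (fun m => rsum 3 (fun j =>
      (2 * kdelta i m - 3 * Sigma_up a a1 t i m) * inv3 (a t) m j * v i * v j)))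
    >= - (3 / 2) * (Rmax (Sbar gam a t) 0 / (theta a a1 t) ^ 2)
         * rsum 3 (fun i => rsum 3 (fun j => inv3 (a t) i j * v i * v j)).
Proof.
  intros v t Ht Hth.
  assert (HA := Hpos t Ht).
  assert (Hd : det3 (a t) <> 0)
    by (destruct (sym_posdef3_minors _ HA) as (_ & _ & Hdet); lra).
  assert (HB : sym3 (inv3 (a t))) by apply inv3_sym, sym_posdef3_sym, HA.
  assert (Hk : sym3 (a1 t)).
  { destruct HI as (_ & _ & Hopen); destruct (Hopen t Ht) as (r & Hr & Hball).
    apply (derivative_sym3 a a1 t r); auto.
    intros s Hs; apply sym_posdef3_sym, Hpos, Hball, Hs. }
  assert (Henergy : tnorm3 (inv3 (a t)) (kbar a1 t) <= Sbar gam a t + theta a a1 t ^ 2).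
  { assert (Hein := HEinstein t 0%nat 0%nat Ht ltac:(lia) ltac:(lia)).
    change (g4 a t 0%nat 0%nat) with (-1) in Hein.
    assert (Hrho0 := Hrho t Ht).
    assert (E := einstein00_bianchi gam a a1 dG t
                   (fun i j => Ha1 t i j Ht) (fun c x y => HdG t c x y Ht) Hd HB Hk).
    lra. }
  apply (shear_form_lower_bound (a t) (kbar a1 t)); auto.
  destruct Hk as (K10 & K20 & K21); repeat split; unfold kbar; congruence.
Qed.
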